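(* For $H\in[0,1]$ let $\rho_1(H)=2^{2H-1}-1$, $\rho_2(H)=\frac12\left(3^{2H}-2^{2H+1}+1\right)$ and $$\det\Sigma_3(H)=\det\begin{pmatrix}1&\rho_1(H)&\rho_2(H)\\ \rho_1(H)&1&\rho_1(H)\\ \rho_2(H)&\rho_1(H)&1\end{pmatrix}=1+2\rho_1(H)^2\rho_2(H)-\rho_2(H)^2-2\rho_1(H)^2 .$$ Then $\det\Sigma_3(H)$ increases from $\frac12$ to $1$ as $H$ increases from $0$ to $\frac12$, and decreases from $1$ to $0$ as $H$ increases from $\frac12$ to $1$. Consequently, $\log(\det\Sigma_3(H))$ increases from $-\log 2$ to $0$ as $H$ increases from $0$ to $\frac12$, and decreases from $0$ to $-\infty$ as $H$ increases from $\frac12$ to $1$.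
   Context: $\Sigma_3(H)$ is the covariance matrix of $(G^H_1,G^H_2,G^H_3)$, where $G^H_k=B^H_k-B^H_{k-1}$ is fractional Gaussian noise built from a fractional Brownian motion with Hurst index $H$; the autocovariances are $\rho_k(H)=\frac12((k+1)^{2H}-2k^{2H}+(k-1)^{2H})$, and the explicit formulas for $\rho_1,\rho_2$ above are used also at $H=0,1$. Logarithms are natural, with $\log 0=-\infty$. *)

From HB Require Import structures.
From mathcomp Require Import all_boot all_order all_algebra.
From mathcomp Require Import all_classical all_reals all_analysis.
Set Implicit Arguments. Unset Strict Implicit. Unset Printing Implicit Defensive.
Import Order.TTheory GRing.Theory Num.Theory.
Local Open Scope ring_scope.

Section FGN.
Variable R : realType.

Definition rho1 (H : R) : R := (2 : R) `^ (2 * H - 1) - 1.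
Definition rho2 (H : R) : R := ((3 : R) `^ (2 * H) - (2 : R) `^ (2 * H + 1) + 1) / 2.

Definition Sigma3 (H : R) : 'M[R]_3 :=
  \matrix_(i < 3, j < 3)
    (if i == j then 1
     else if `|(i : int) - (j : int)|%N == 1%N then rho1 H else rho2 H).

Definition detSigma3 (H : R) : R := \det (Sigma3 H).

Definition elog (x : R) : \bar R := if 0 < x then (ln x)%:E else -oo%E.

End FGN.

From HB Require Import structures.
From mathcomp Require Import all_boot all_order all_algebra.
From mathcomp Require Import all_classical all_reals all_analysis.
From mathcomp Require Import ring lra.
Set Implicit Arguments. Unset Strict Implicit. Unset Printing Implicit Defensive.
Import Order.TTheory GRing.Theory Num.Theory.
Local Open Scope ring_scope.

(* With u = 4^H and v = 9^H the determinant is the polynomial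
   (-1 + 2v + 3u^2 - 2u^3 - v^2 + u^2 v) / 4, so its derivative in H is
   ln 2 * u^2 (3 - 3u + v) + ln 3 / 2 * v (2 - 2v + u^2).  Divided by u, resp. v,
   each bracket becomes a positive combination of exponentials in H minus a
   constant, hence strictly convex, and it vanishes at H = 1/2 and H = 1.  A strictly
   convex function is positive left of its two roots and negative between them, so
   det Sigma_3 increases on [0, 1/2] and decreases on [1/2, 1]; its values at 0, 1/2
   and 1 are 1/2, 1 and 0, and the logarithm is increasing. *)

Section RootsOfConvex.
Variables (R : realFieldType) (f df : R -> R).
Hypothesis above_tangents : forall x c, x != c -> f c + df c * (x - c) < f x.
Variables a b : R.
Hypotheses (ab : a < b) (fa0 : f a = 0) (fb0 : f b = 0).

Lemma gt0_left_of_roots c : c < a -> 0 < f c.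
Proof.
move=> ca.
have := above_tangents (negbT (lt_eqF ca)).
have := above_tangents (negbT (gt_eqF ab)).
rewrite fa0 fb0 !add0r pmulr_llt0 ?subr_gt0 // => da_lt0.
by apply: lt_trans; rewrite nmulr_rgt0 // subr_lt0.
Qed.

Lemma lt0_between_roots c : a < c < b -> f c < 0.
Proof.
case/andP=> ac cb.
have := above_tangents (negbT (lt_eqF ac)).
have := above_tangents (negbT (gt_eqF cb)).
rewrite fa0 fb0 => tb ta.
suff : f c * (b - a) < 0 by rewrite pmulr_llt0 // subr_gt0.
(* weighting the tangent inequalities at c by b - c and c - a cancels the slope *)
have -> : f c * (b - a) =
    (f c + df c * (a - c)) * (b - c) + (f c + df c * (b - c)) * (c - a) by ring.
by rewrite -[0]addr0 ltrD // pmulr_llt0 // subr_gt0.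
Qed.

End RootsOfConvex.

Section Exponentials.
Variable R : realType.

Lemma powR_expR (b x : R) : 0 < b -> b `^ x = expR (x * ln b).
Proof. by move=> b0; rewrite /powR gt_eqF. Qed.

Lemma expR_tangent_le (k x c : R) :
  expR (k * c) + k * expR (k * c) * (x - c) <= expR (k * x).
Proof.
have -> : k * x = k * c + k * (x - c) by ring.
have -> : expR (k * c) + k * expR (k * c) * (x - c) =
  expR (k * c) * (1 + k * (x - c)) by ring.
rewrite expRD ler_pM2l ?expR_gt0 //.
exact: expR_ge1Dx.
Qed.

Lemma expR_tangent_lt (k x c : R) : k != 0 -> x != c ->
  expR (k * c) + k * expR (k * c) * (x - c) < expR (k * x).
Proof.
move=> k0 xc; have -> : k * x = k * c + k * (x - c) by ring.
have -> : expR (k * c) + k * expR (k * c) * (x - c) =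
  expR (k * c) * (1 + k * (x - c)) by ring.
rewrite expRD ltr_pM2l ?expR_gt0 //.
by apply: expR_gt1Dx; rewrite mulf_neq0 // subr_eq0.
Qed.

Lemma expR_comb_sign (c k m a b : R) : 0 < c -> k != 0 -> a < b ->
  c - c * expR (k * a) + expR (m * a) = 0 ->
  c - c * expR (k * b) + expR (m * b) = 0 ->
  (forall x, x < a -> 0 < c - c * expR (k * x) + expR (m * x)) /\
  (forall x, a < x < b -> c - c * expR (k * x) + expR (m * x) < 0).
Proof.
move=> c0 k0 ab fa0 fb0.
pose g (x : R) : R := c * expR (- k * x) + expR ((m - k) * x) - c.
pose dg (x : R) : R := c * (- k * expR (- k * x)) + (m - k) * expR ((m - k) * x).
have fE x : c - c * expR (k * x) + expR (m * x) = expR (k * x) * g x.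
  have e1 : expR (k * x) * expR (- k * x) = 1 by rewrite -expRD mulNr addrN expR0.
  have e2 : expR (k * x) * expR ((m - k) * x) = expR (m * x).
    by rewrite -expRD; congr expR; ring.
  rewrite /g mulrBr mulrDr mulrCA e1 e2; ring.
have g_above x y : x != y -> g y + dg y * (x - y) < g x.
  move=> xy; have := expR_tangent_le (m - k) x y.
  have nk0 : - k != 0 by rewrite oppr_eq0.
  have := expR_tangent_lt nk0 xy.
  rewrite /g /dg; nra.
have g0 x : c - c * expR (k * x) + expR (m * x) = 0 -> g x = 0.
  by rewrite fE => /eqP; rewrite mulf_eq0 expR_eq0 => /eqP.
have [ga0 gb0] := (g0 a fa0, g0 b fb0).
split=> x hx; rewrite fE.
- by rewrite pmulr_rgt0 ?expR_gt0 // (gt0_left_of_roots g_above ab ga0 gb0).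
- by rewrite pmulr_rlt0 ?expR_gt0 // (lt0_between_roots g_above ab ga0 gb0).
Qed.

Lemma is_derive_expR_scaled (k x : R) :
  is_derive x 1 (fun t => expR (k * t)) (k * expR (k * x)).
Proof.
have hk : is_derive x 1 ( *%R k) k.
  by have := is_deriveZ k (is_derive_id x 1); rewrite /GRing.scale /= mulr1.
by apply: is_derive_eq (is_derive1_comp (is_derive_expR _) hk) _; rewrite mulrC.
Qed.

End Exponentials.

Section FractionalGaussianNoise.
Variable R : realType.

Definition pow4 (H : R) : R := expR (2 * ln 2 * H).
Definition pow9 (H : R) : R := expR (2 * ln 3 * H).

Global Instance is_derive_pow4 (x : R) : is_derive x 1 pow4 (2 * ln 2 * pow4 x).
Proof. exact: is_derive_expR_scaled. Qed.

Global Instance is_derive_pow9 (x : R) : is_derive x 1 pow9 (2 * ln 3 * pow9 x).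
Proof. exact: is_derive_expR_scaled. Qed.

Lemma rho1_pow4 (H : R) : rho1 H = pow4 H / 2 - 1.
Proof.
rewrite /rho1 powR_expR // /pow4.
have -> : (2 * H - 1) * ln 2 = 2 * ln 2 * H - ln (2 : R) by ring.
by rewrite expRB lnK // posrE.
Qed.

Lemma rho2_pow (H : R) : rho2 H = (pow9 H - 2 * pow4 H + 1) / 2.
Proof.
rewrite /rho2 !powR_expR // /pow4 /pow9.
have -> : (2 * H + 1) * ln 2 = 2 * ln 2 * H + ln (2 : R) by ring.
have -> : 2 * H * ln 3 = 2 * ln 3 * H by ring.
by rewrite expRD lnK ?posrE //; ring.
Qed.

Lemma detSigma3E (H : R) :
  detSigma3 H = 1 + 2 * rho1 H ^+ 2 * rho2 H - rho2 H ^+ 2 - 2 * rho1 H ^+ 2.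
Proof.
rewrite /detSigma3 (expand_det_row _ 0) !big_ord_recl big_ord0 /cofactor.
rewrite !(expand_det_row _ 0) !big_ord_recl !big_ord0 /cofactor !det_mx11.
by rewrite !mxE /= /bump /=; ring.
Qed.

Lemma detSigma3_pow (H : R) : detSigma3 H = (-1 + 2 * pow9 H + 3 * pow4 H ^+ 2
  - 2 * pow4 H ^+ 3 - pow9 H ^+ 2 + pow4 H ^+ 2 * pow9 H) / 4.
Proof. by rewrite detSigma3E rho1_pow4 rho2_pow; field. Qed.

Definition detSigma3_slope (x : R) : R :=
  ln 2 * pow4 x ^+ 2 * (3 - 3 * pow4 x + pow9 x)
  + ln 3 / 2 * pow9 x * (2 - 2 * pow9 x + pow4 x ^+ 2).

Global Instance is_derive_detSigma3 (x : R) :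
  is_derive x 1 (@detSigma3 R) (detSigma3_slope x).
Proof.
have -> : @detSigma3 R = fun H => (-1 + 2 * pow9 H + 3 * pow4 H ^+ 2
  - 2 * pow4 H ^+ 3 - pow9 H ^+ 2 + pow4 H ^+ 2 * pow9 H) / 4.
  by apply/funext => H; rewrite detSigma3_pow.
by apply: is_derive_eq; rewrite /GRing.scale /detSigma3_slope /=; field.
Qed.

Lemma expR_mul2ln_half (b : R) : 0 < b -> expR (2 * ln b * 2^-1) = b.
Proof.
by move=> b0; rewrite (_ : 2 * ln b * 2^-1 = ln b) ?lnK ?posrE //; field.
Qed.

Lemma expR_mul2ln1 (b : R) : 0 < b -> expR (2 * ln b * 1) = b ^+ 2.
Proof. by move=> b0; rewrite mulr1 expRM_natl lnK ?posrE. Qed.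

Lemma detSigma3_0 : detSigma3 0 = 2^-1 :> R.
Proof. by rewrite detSigma3_pow /pow4 /pow9 !mulr0 expR0; field. Qed.

Lemma detSigma3_half : detSigma3 2^-1 = 1 :> R.
Proof. by rewrite detSigma3_pow /pow4 /pow9 !expR_mul2ln_half //; field. Qed.

Lemma detSigma3_1 : detSigma3 1 = 0 :> R.
Proof. by rewrite detSigma3_pow /pow4 /pow9 !expR_mul2ln1 //; field. Qed.

Lemma ln2_gt0 : 0 < ln (2 : R). Proof. by rewrite ln_gt0 // ltr1n. Qed.
Lemma ln3_gt0 : 0 < ln (3 : R). Proof. by rewrite ln_gt0 // ltr1n. Qed.

Lemma sign_3_sub_3pow4_add_pow9 :
  (forall x, x < 2^-1 -> 0 < 3 - 3 * pow4 x + pow9 x) /\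
  (forall x, 2^-1 < x < 1 -> 3 - 3 * pow4 x + pow9 x < 0).
Proof.
apply: (@expR_comb_sign R 3 (2 * ln 2) (2 * ln 3) 2^-1 1);
  rewrite ?expR_mul2ln_half ?expR_mul2ln1 //.
- by rewrite mulf_neq0 // gt_eqF // ln2_gt0.
- by rewrite invf_lt1 // ltr1n.
- by ring.
- by ring.
Qed.

Lemma sign_2_sub_2pow9_add_pow4_sqr :
  (forall x, x < 2^-1 -> 0 < 2 - 2 * pow9 x + pow4 x ^+ 2) /\
  (forall x, 2^-1 < x < 1 -> 2 - 2 * pow9 x + pow4 x ^+ 2 < 0).
Proof.
have ln4 : ln (4 : R) = 2 * ln 2.
  by rewrite (_ : 4 = 2 * 2) ?lnM ?posrE //; ring.
have pow4_sqr x : pow4 x ^+ 2 = expR (2 * ln 4 * x).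
  by rewrite ln4 /pow4 -expRM_natl; congr expR; ring.
setoid_rewrite pow4_sqr.
apply: (@expR_comb_sign R 2 (2 * ln 3) (2 * ln 4) 2^-1 1);
  rewrite ?expR_mul2ln_half ?expR_mul2ln1 //.
- by rewrite mulf_neq0 // gt_eqF // ln3_gt0.
- by rewrite invf_lt1 // ltr1n.
- by ring.
- by ring.
Qed.

Lemma detSigma3_slope_gt0 (x : R) : x < 2^-1 -> 0 < detSigma3_slope x.
Proof.
move=> hx; have q4 := expR_gt0 (2 * ln 2 * x); have q9 := expR_gt0 (2 * ln 3 * x).
rewrite /detSigma3_slope addr_gt0 // !mulr_gt0 ?exprn_gt0 ?ln2_gt0 ?ln3_gt0 //.
- exact: sign_3_sub_3pow4_add_pow9.1.
- exact: sign_2_sub_2pow9_add_pow4_sqr.1.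
Qed.

Lemma detSigma3_slope_lt0 (x : R) : 2^-1 < x < 1 -> detSigma3_slope x < 0.
Proof.
move=> hx; have q4 := expR_gt0 (2 * ln 2 * x); have q9 := expR_gt0 (2 * ln 3 * x).
rewrite /detSigma3_slope -[0]addr0 ltrD // pmulr_rlt0
  ?mulr_gt0 ?exprn_gt0 ?ln2_gt0 ?ln3_gt0 //.
- exact: sign_3_sub_3pow4_add_pow9.2.
- exact: sign_2_sub_2pow9_add_pow4_sqr.2.
Qed.

Lemma detSigma3_increasing :
  {in `[0, 2^-1] &, {homo @detSigma3 R : x y / x < y}}.
Proof.
apply: gtr0_derive1_lt_cc => [x _|x|]; first exact: ex_derive.
  rewrite in_itv /= => /andP[_ hx].
  by rewrite derive1E derive_val detSigma3_slope_gt0.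
by apply: derivable_within_continuous => x _; exact: ex_derive.
Qed.

Lemma detSigma3_decreasing :
  {in `[2^-1, 1] &, {homo @detSigma3 R : x y /~ x < y}}.
Proof.
apply: ltr0_derive1_lt_cc => [x _|x|]; first exact: ex_derive.
  rewrite in_itv /= => hx.
  by rewrite derive1E derive_val detSigma3_slope_lt0.
by apply: derivable_within_continuous => x _; exact: ex_derive.
Qed.

End FractionalGaussianNoise.

Section ExtendedLog.
Variable R : realType.
Local Open Scope ereal_scope.

Lemma elog_ln (x : R) : (0 < x)%R -> elog x = (ln x)%:E.
Proof. by rewrite /elog => ->. Qed.

Lemma elog0 : elog (0 : R) = -oo.
Proof. by rewrite /elog ltxx. Qed.

Lemma elog_lt (x y : R) : (0 < y)%R -> (x < y)%R -> elog x < elog y.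
Proof.
move=> y0 xy; rewrite (elog_ln y0) /elog.
by case: ifPn => x0; [rewrite lte_fin ltr_ln ?posrE | exact: ltNyr].
Qed.

End ExtendedLog.

Theorem mainTheorem2 (R : realType) :
  (forall H : R, H \in `[0, 1] ->
     detSigma3 H = 1 + 2 * rho1 H ^+ 2 * rho2 H - rho2 H ^+ 2 - 2 * rho1 H ^+ 2) /\
  (forall x y : R, x \in `[0, 2^-1] -> y \in `[0, 2^-1] -> x < y ->
     detSigma3 x < detSigma3 y) /\
  (forall x y : R, x \in `[2^-1, 1] -> y \in `[2^-1, 1] -> x < y ->
     detSigma3 y < detSigma3 x) /\
  detSigma3 (0:R) = 2^-1 /\ detSigma3 (2^-1 : R) = 1 /\ detSigma3 (1:R) = 0 /\
  (forall x y : R, x \in `[0, 2^-1] -> y \in `[0, 2^-1] -> x < y ->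
     (elog (detSigma3 x) < elog (detSigma3 y))%E) /\
  (forall x y : R, x \in `[2^-1, 1] -> y \in `[2^-1, 1] -> x < y ->
     (elog (detSigma3 y) < elog (detSigma3 x))%E) /\
  elog (detSigma3 (0:R)) = (- ln 2)%:E /\ elog (detSigma3 (2^-1 : R)) = 0%E /\
  elog (detSigma3 (1:R)) = -oo%E.
Proof.
have inc := @detSigma3_increasing R; have dec := @detSigma3_decreasing R.
have zero_in : (0 : R) \in `[0, 2^-1] by rewrite in_itv /= lexx invr_ge0 ler0n.
have one_in : (1 : R) \in `[2^-1, 1] by rewrite in_itv /= lexx invf_le1 ?ler1n.
split; first by move=> H _; exact: detSigma3E.
split; first exact: inc.
split; first by move=> x y hx hy; apply: dec.
split; first exact: detSigma3_0.
split; first exact: detSigma3_half.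
split; first exact: detSigma3_1.
split.
  move=> x y hx hy xy; apply: elog_lt; last exact: inc.
  have y0 : 0 < y by apply: le_lt_trans xy; move: hx; rewrite in_itv /= => /andP[].
  apply: lt_trans (inc _ _ zero_in hy y0).
  by rewrite detSigma3_0 invr_gt0 ltr0n.
split.
  move=> x y hx hy xy; apply: elog_lt; last exact: dec.
  have x1 : x < 1 by move: hy; rewrite in_itv /= => /andP[_ /(lt_le_trans xy)].
  by rewrite -detSigma3_1 dec.
rewrite detSigma3_0 detSigma3_half detSigma3_1 elog0 !elog_ln ?ln1 ?lnV ?posrE //.
Qed.
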